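(* Let $\rho_n$ be the number of distinct Manacher arrays of strings of length $n$ and $\sigma_n$ the number of counter arrays of length $n$. Then $\rho_n\le\sigma_n$; more precisely, $\rho_n$ is at most the number of distinct sequences $(c_1,\dots,c_n)$ arising from strings of length $n$, where $c_i$ is the center of the longest palindromic suffix of $S[1..i]$.
   Context: The center of $S[a..b]$ is $(a+b)/2$. The Manacher array of a string $S$ of length $n$ is the array $\mathsf A[1..2n-1]$ where, for $i=2k-1$, $\mathsf A[i]$ is the largest $r\ge 0$ with $1\le k-r$, $k+r\le n$ and $S[k-r..k+r]$ a palindrome, and for $i=2k$, $\mathsf A[i]$ is the largest $r\ge0$ with $1\le k-r+1$, $k+r\le n$ and $S[k-r+1..k+r]$ a palindrome. A counter array of length $n$ is an integer array $(a_1,\dots,a_n)$ with $1\le a_i\le i$ and $a_{i+1}\ge a_i-1$ for $1\le i<n$. *)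

From mathcomp Require Import all_boot.
Set Implicit Arguments. Unset Strict Implicit. Unset Printing Implicit Defensive.

(* Strings are sequences over a finite alphabet Sigma; positions are 1-indexed:
   S[j] := nth None (map Some s) (j-1)  (None outside the string). *)
Definition chr (Sigma : eqType) (s : seq Sigma) (j : nat) : option Sigma :=
  nth None (map Some s) j.-1.

(* S[a..b] is a palindrome (1-indexed, inclusive; empty if b < a). *)
Definition pal (Sigma : eqType) (s : seq Sigma) (a b : nat) : bool :=
  all (fun j => chr s j == chr s (a + b - j)) (iota a (b.+1 - a)).

Definition man_ok (Sigma : eqType) (s : seq Sigma) (i r : nat) : bool :=
  let n := size s in
  if odd i then
    let k := i.+1./2 in (* i = 2k-1 *)
    [&& 1 <= k - r, r < k, k + r <= n & pal s (k - r) (k + r)]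
  else
    let k := i./2 in (* i = 2k *)
    [&& r <= k, k + r <= n & pal s (k - r + 1) (k + r)].

(* Manacher array A[1..2n-1], as a sequence of length 2n-1.  Every admissible
   r satisfies r < n, so the max over r < n is the largest admissible r. *)
Definition manacher (Sigma : eqType) (s : seq Sigma) : seq nat :=
  [seq \max_(r < size s | man_ok s i r) r | i <- iota 1 (size s).*2.-1].

Definition lps_len (Sigma : eqType) (s : seq Sigma) (i : nat) : nat :=
  \max_(l < i.+1 | pal s (i.+1 - l) i) l.

(* Twice the center of the longest palindromic suffix of S[1..i]:
   the suffix is S[i-L+1..i], its center is (i-L+1+i)/2. *)
Definition lps_center2 (Sigma : eqType) (s : seq Sigma) (i : nat) : nat :=
  (i.+1 - lps_len s i) + i.

Definition centers2 (Sigma : eqType) (s : seq Sigma) : seq nat :=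
  [seq lps_center2 s i | i <- iota 1 (size s)].

Definition rho (Sigma : finType) (n : nat) : nat :=
  size (undup [seq manacher (tval t) | t <- enum {: n.-tuple Sigma}]).

Definition ncenters (Sigma : finType) (n : nat) : nat :=
  size (undup [seq centers2 (tval t) | t <- enum {: n.-tuple Sigma}]).

(* counter array (a_1..a_n) given as a seq, a_i = nth 0 a (i-1). *)
Definition is_counter (a : seq nat) : bool :=
  all (fun i => (1 <= nth 0 a i.-1 <= i)) (iota 1 (size a)) &&
  all (fun i => nth 0 a i.-1 - 1 <= nth 0 a i) (iota 1 (size a).-1).

(* sigma_n: number of counter arrays of length n (entries are <= n, so
   they are faithfully enumerated by n-tuples over 'I_(n+1)). *)
Definition sigma (n : nat) : nat :=
  #|[set t : n.-tuple 'I_n.+1 | is_counter [seq val x | x <- t]]|.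

(* The Manacher array only consults which substrings are palindromes, and the
   palindromic substrings are determined by the lengths of the longest
   palindromic suffixes of the prefixes: if S[a..b] is longer than the longest
   palindromic suffix of S[1..b] it is not a palindrome, if it is that suffix
   it is one, and if it is shorter it can be mirrored inside that suffix to a
   substring ending strictly before b.  The lengths are in turn read off the
   centers, and the starting positions a_i of the longest palindromic suffixes
   form a counter array: a palindromic suffix of S[1..i+1] of length L > 2
   yields one of S[1..i] of length L - 2. *)

From mathcomp Require Import all_boot zify.
Set Implicit Arguments. Unset Strict Implicit. Unset Printing Implicit Defensive.

Section Palindromes.
Variable Sigma : eqType.
Implicit Types s t : seq Sigma.

Lemma palP s a b :
  reflect (forall j, a <= j <= b -> chr s j = chr s (a + b - j)) (pal s a b).
Proof.
apply: (iffP allP) => H j.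
- by move=> Hj; apply/eqP; apply: H; rewrite mem_iota; lia.
- by rewrite mem_iota => Hj; apply/eqP; apply: H; lia.
Qed.

Lemma pal_empty s a b : b < a -> pal s a b.
Proof. by move=> ltba; apply/palP => j; lia. Qed.

Lemma pal1 s i : pal s i i.
Proof. by apply/palP => j Hj; congr chr; lia. Qed.

Lemma pal_shrink s a b a' b' :
  pal s a b -> a <= a' -> b' <= b -> a' + b' = a + b -> pal s a' b'.
Proof. by move=> /palP H lea leb eab; apply/palP => j Hj; rewrite eab; apply: H; lia. Qed.

Lemma pal_mirror s p b a : pal s p b -> p <= a <= b ->
  pal s a b = pal s p (p + b - a).
Proof.
move=> /palP P Ha.
have refl j : p <= j <= b -> chr s j = chr s (p + b - j) by move=> ?; apply: P.
by apply/palP/palP => H j Hj; rewrite refl; try lia; rewrite H; try lia;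
  rewrite refl; try congr chr; lia.
Qed.

Lemma lps_len_le s i : lps_len s i <= i.
Proof. by apply/bigmax_leqP => l _; rewrite -ltnS. Qed.

Lemma lps_len_max s i l : l <= i -> pal s (i.+1 - l) i -> l <= lps_len s i.
Proof.
by move=> leli Hl; apply: (leq_bigmax_cond (Ordinal (leli : l < i.+1)) Hl).
Qed.

Lemma pal_lps s i : pal s (i.+1 - lps_len s i) i.
Proof.
have Hne : 0 < #|fun l : 'I_i.+1 => pal s (i.+1 - l) i|.
  by apply/card_gt0P; exists ord0; rewrite /in_mem /= pal_empty // subn0.
by case: (eq_bigmax_cond (@nat_of_ord i.+1) Hne) => l Hl; rewrite /lps_len => ->.
Qed.

Lemma lps_len_gt0 s i : 0 < i -> 0 < lps_len s i.
Proof. by move=> i_gt0; apply: lps_len_max; rewrite ?subSS ?subn0 ?pal1. Qed.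

Lemma lps_lenS s i : lps_len s i.+1 <= lps_len s i + 2.
Proof.
have [L_le2|L_gt2] := leqP (lps_len s i.+1) 2; first lia.
have le_L := lps_len_le s i.+1.
suff : lps_len s i.+1 - 2 <= lps_len s i by lia.
by apply: lps_len_max; [lia | apply: (pal_shrink (pal_lps s i.+1)); lia].
Qed.

Definition lps_start s i := i.+1 - lps_len s i.

Lemma lps_start_bounds s i : 0 < i -> 0 < lps_start s i <= i.
Proof.
move=> i_gt0; have := lps_len_gt0 s i_gt0.
by have := lps_len_le s i; rewrite /lps_start; lia.
Qed.

Lemma lps_startS s i : lps_start s i - 1 <= lps_start s i.+1.
Proof. by have := lps_lenS s i; rewrite /lps_start; lia. Qed.

Lemma centers2E s : centers2 s = [seq lps_start s i + i | i <- iota 1 (size s)].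
Proof. by []. Qed.

Lemma pal_eq_of_lps_len s t n :
  {in [pred i | 0 < i <= n], lps_len s =1 lps_len t} ->
  forall a b, 0 < a -> b <= n -> pal s a b = pal t a b.
Proof.
move=> eqL a b; elim/ltn_ind: b a => b IH a a_gt0 le_bn.
have [lt_ba|le_ab] := ltnP b a; first by rewrite !pal_empty.
have eqLb : lps_len s b = lps_len t b by apply: eqL; rewrite inE; lia.
have Ps := pal_lps s b; have Pt := pal_lps t b; rewrite -eqLb in Pt.
have longest (u : seq Sigma) : pal u a b -> b.+1 - a <= lps_len u b.
  by move=> Pu; apply: lps_len_max; [lia | rewrite subKn //; lia].
have := lps_len_le s b; case: (ltngtP (lps_len s b) (b.+1 - a)) => cmpL le_Lb.
- case Pas: (pal s a b); case Pat: (pal t a b) => //.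
  + by have := longest _ Pas; lia.
  + by have := longest _ Pat; lia.
- rewrite (pal_mirror Ps); last lia; rewrite (pal_mirror Pt); last lia.
  by apply: IH; lia.
- have -> : a = b.+1 - lps_len s b by lia.
  by rewrite Ps Pt.
Qed.

Lemma manacher_eq_of_lps_len s t :
  size s = size t -> {in [pred i | 0 < i <= size s], lps_len s =1 lps_len t} ->
  manacher s = manacher t.
Proof.
move=> eq_size eqL; rewrite /manacher -eq_size; apply: eq_map => i.
apply: eq_bigl => r; rewrite /man_ok -eq_size.
have E := pal_eq_of_lps_len eqL.
by case: (odd i) => /=; do ![case: leqP => //= ?]; apply: E => //; rewrite addn1.
Qed.

Lemma lps_len_eq_of_centers2 s t : centers2 s = centers2 t ->
  {in [pred i | 0 < i <= size s], lps_len s =1 lps_len t}.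
Proof.
move=> eqC i /andP [i_gt0 le_is].
have eq_size : size s = size t by have := congr1 size eqC; rewrite !size_map !size_iota.
have := congr1 (nth 0 ^~ i.-1) eqC.
rewrite !centers2E !(nth_map 0) ?size_iota -?eq_size ?nth_iota; try lia.
rewrite add1n prednK //.
by have := lps_len_le s i; have := lps_len_le t i; rewrite /lps_start; lia.
Qed.

End Palindromes.

Lemma size_undup_map_le (T U V : eqType) (f : T -> U) (g : T -> V) (xs : seq T) :
  {in xs &, forall x y, f x = f y -> g x = g y} ->
  size (undup (map g xs)) <= size (undup (map f xs)).
Proof.
case: xs => [|x0 xs'] // fg; set xs := x0 :: xs' in fg *.
pose h u := g (nth x0 xs (index u (map f xs))).
rewrite -(size_map h); apply: uniq_leq_size; first exact: undup_uniq.
move=> z; rewrite mem_undup => /mapP [x xs_x ->].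
apply/mapP; exists (f x); first by rewrite mem_undup map_f.
have ltx : index (f x) (map f xs) < size xs by rewrite -(size_map f) index_mem map_f.
apply: fg => //; first exact: mem_nth.
by rewrite -(nth_map x0 (f x0)) // nth_index // map_f.
Qed.

Section CounterArrays.
Variables (Sigma : finType) (n : nat).
Implicit Type x : n.-tuple Sigma.

(* The entries are at most n, so inord is faithful. *)
Definition lps_starts x : n.-tuple 'I_n.+1 := [tuple inord (lps_start x i.+1) | i < n].

Lemma nth_lps_starts x j :
  j < n -> nth 0 [seq val k | k <- lps_starts x] j = lps_start x j.+1.
Proof.
move=> ltjn; rewrite (nth_map ord0) ?size_tuple // -(tnth_nth _ _ (Ordinal ltjn)).
by rewrite tnth_mktuple /= inordK // ltnS; have := lps_start_bounds x (ltn0Sn j); lia.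
Qed.

Lemma is_counter_lps_starts x : is_counter [seq val k | k <- lps_starts x].
Proof.
rewrite /is_counter size_map size_tuple.
apply/andP; split; apply/allP => i; rewrite mem_iota => Hi;
  rewrite !nth_lps_starts ?prednK; try lia.
- by apply: lps_start_bounds; lia.
- exact: lps_startS.
Qed.

Lemma centers2_eq_of_lps_starts x y :
  lps_starts x = lps_starts y -> centers2 x = centers2 y.
Proof.
move=> eqA; rewrite !centers2E !size_tuple; apply/eq_in_map => i; rewrite mem_iota => Hi.
have := congr1 (fun a : n.-tuple 'I_n.+1 => nth 0 [seq val k | k <- a] i.-1) eqA.
by rewrite !nth_lps_starts ?prednK; try lia; move=> ->.
Qed.

End CounterArrays.

Theorem corollary3p6 (Sigma : finType) (n : nat) :
  rho Sigma n <= ncenters Sigma n /\ rho Sigma n <= sigma n.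
Proof.
have rho_le : rho Sigma n <= ncenters Sigma n.
  apply: size_undup_map_le => x y _ _ eqC.
  apply: manacher_eq_of_lps_len; first by rewrite !size_tuple.
  exact: lps_len_eq_of_centers2.
split=> //; apply: (leq_trans rho_le).
have ncenters_le : ncenters Sigma n <=
    size (undup [seq lps_starts x | x <- enum {: n.-tuple Sigma}]).
  by apply: size_undup_map_le => x y _ _; apply: centers2_eq_of_lps_starts.
apply: (leq_trans ncenters_le); rewrite /sigma cardE.
apply: uniq_leq_size; first exact: undup_uniq.
move=> a; rewrite mem_undup => /mapP [x _ ->].
by rewrite mem_enum inE is_counter_lps_starts.
Qed.
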